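(* Z-light-first order is energy-bound: for every constant $\Delta\ge1$ there is a constant $C$ (depending only on $\Delta$) such that for every rooted tree $T$ with $n$ vertices, every vertex having at most $\Delta$ children, stored in Z-light-first order, the total energy $\sum_{v}\sum_{c \text{ child of } v} \mathrm{dist}(p_v,p_c)$ of every vertex sending a message to each of its children is at most $C n$.
   Context: Processors sit on the cells of a two-dimensional grid; sending a message between processors at $(x_1,y_1)$ and $(x_2,y_2)$ costs energy $|x_1-x_2|+|y_1-y_2|$. Z-order (Morton order) is the enumeration of grid cells $(x,y)$, $x,y\in\{0,\dots,2^m-1\}$, in which the cell at position $i$ (counting from $0$) has $x$ equal to the number formed by the even-indexed bits of $i$ and $y$ equal to the number formed by the odd-indexed bits of $i$ (bit $2t$ of $i$ is bit $t$ of $x$, bit $2t+1$ of $i$ is bit $t$ of $y$). $\mathrm{dist}(i,j)$ is the energy of sending a message from the processor at position $i$ to the one at position $j$. Light-first order: each tree vertex $v$ is stored in one processor at position $p_v$ (root at the first position). Let $s(v)$ be the size of the subtree rooted at $v$. For each vertex $v$ with children indexed $c_1,\dots,c_d$ with $s(c_1)\le\dots\le s(c_d)$, child $c_i$ is stored at position $p_v+1+\sum_{j=1}^{i-1}s(c_j)$. Z-light-first order is light-first order with respect to Z-order. *)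

From mathcomp Require Import all_boot.
Set Implicit Arguments.
Unset Strict Implicit.
Unset Printing Implicit Defensive.

Definition bit (i k : nat) : nat := odd (i %/ 2 ^ k).

(* x-coordinate of position i: number formed by the even-indexed bits of i.
   Bits of index >= 2*(i+1) of i are zero, so the finite sum is exact. *)
Definition zx (i : nat) : nat := \sum_(t < i.+1) bit i (2 * t) * 2 ^ t.
(* y-coordinate: number formed by the odd-indexed bits of i *)
Definition zy (i : nat) : nat := \sum_(t < i.+1) bit i (2 * t).+1 * 2 ^ t.

Definition absdiff (a b : nat) : nat := (a - b) + (b - a).

Definition dist (i j : nat) : nat :=
  absdiff (zx i) (zx j) + absdiff (zy i) (zy j).

Inductive tree := Node of seq tree.

Fixpoint tree_size (t : tree) : nat :=
  let: Node cs := t in (sumn (map tree_size cs)).+1.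

Fixpoint max_children (D : nat) (t : tree) : bool :=
  let: Node cs := t in (size cs <= D) && all (max_children D) cs.

(* children listed in nondecreasing order of subtree size (at every vertex);
   ties are broken by the (arbitrary) order of the list *)
Fixpoint light_sorted (t : tree) : bool :=
  let: Node cs := t in
  sorted (fun a b => tree_size a <= tree_size b) cs && all light_sorted cs.

(* Total energy of the light-first layout: the root of t is stored at position
   p, and the i-th child c_i of a vertex at p_v is stored at
   p_v + 1 + sum_{j<i} s(c_j). *)
Fixpoint lf_energy (t : tree) (p : nat) : nat :=
  let: Node cs := t in
  (fix go (cs : seq tree) (q : nat) : nat :=
     match cs with
     | [::] => 0
     | c :: cs' => dist p q + lf_energy c q + go cs' (q + tree_size c)
     end) cs p.+1.

From mathcomp Require Import all_boot zify.
From Stdlib Require List.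
Set Implicit Arguments.
Unset Strict Implicit.
Unset Printing Implicit Defensive.

(* Cut the positions into aligned blocks of size [M = 4^k]. The Z-order is
   self-similar under [i |-> i %/ 4], so [dist i j] is at most the sum of
   [2^(k+1)] over the levels [k] at which [i] and [j] lie in different blocks,
   and it suffices to show that O(D (k+1) n / 4^k) edges cross a block
   boundary at level [k].
   Call the edge from [v] to a child short if it spans at most [M] positions.
   Since children are stored lightest first, a long edge is preceded by a
   child of size at least [M / D] (a large child), so there are at most
   [sum_v (#large children of v - 1) <= D n / M] long edges. A short edge from
   [v] crossing a boundary [b] either ends at [b] or passes over the child
   whose subtree contains [b], which then has size below [M] and below half of
   the subtree of [v]; hence at most [log2 M + 1] ancestors of [b] send short
   edges across it, at most [D] each. There are at most [n / M] boundaries, and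
   the resulting series [sum_k 2^(k+1) (2k+3) / 4^k] converges. *)

Definition zbits (o n i : nat) : nat := \sum_(t < n) bit i (2 * t + o) * 2 ^ t.

Lemma zbitsS o n i : zbits o n.+1 i = bit i o + 2 * zbits o n (i %/ 4).
Proof.
rewrite /zbits big_ord_recl muln1 big_distrr; congr (_ + _).
apply: eq_bigr => t _; rewrite expnS mulnCA /bit.
have -> : 2 * bump 0 t + o = 2 + (2 * t + o) by rewrite /bump /=; lia.
by rewrite expnD divnMA.
Qed.

Lemma zbits_stable o n i : i < n -> zbits o n i = zbits o i.+1 i.
Proof.
move=> lt_in; rewrite -(subnKC lt_in); elim: (n - i.+1) => [|d IH].
  by rewrite addn0.
rewrite addnS /zbits big_ord_recr /= -/(zbits o _ i) IH /bit divn_small ?addn0 //.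
by apply: leq_ltn_trans (ltn_expl _ (isT : 1 < 2)); lia.
Qed.

Lemma zbits_div4 o i : zbits o i.+1 i = bit i o + 2 * zbits o (i %/ 4).+1 (i %/ 4).
Proof.
rewrite zbitsS; case: i => [|i]; first by rewrite div0n /zbits big_ord0 big_ord1 /bit div0n.
by rewrite zbits_stable // ltn_Pdiv.
Qed.

Lemma distnn i : dist i i = 0.
Proof. by rewrite /dist /absdiff !subnn. Qed.

Lemma dist_div4 i j : dist i j <= 2 + 2 * dist (i %/ 4) (j %/ 4).
Proof.
have zxE k : zx k = zbits 0 k.+1 k by apply: eq_bigr => t _; rewrite addn0.
have zyE k : zy k = zbits 1 k.+1 k by apply: eq_bigr => t _; rewrite addn1.
have bit_le1 k o : bit k o <= 1 by apply: leq_b1.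
rewrite /dist /absdiff !zxE !zyE.
rewrite (zbits_div4 0 i) (zbits_div4 0 j) (zbits_div4 1 i) (zbits_div4 1 j).
have := bit_le1 i 0; have := bit_le1 j 0; have := bit_le1 i 1; have := bit_le1 j 1.
lia.
Qed.

Definition cross (M a b : nat) : bool := a %/ M != b %/ M.

Lemma dist_le_cross K i j : i < 4 ^ K -> j < 4 ^ K ->
  dist i j <= \sum_(k < K) 2 ^ k.+1 * cross (4 ^ k) i j.
Proof.
elim: K i j => [|K IH] i j lt_i lt_j.
  by move: lt_i lt_j; rewrite !ltnS !leqn0 => /eqP -> /eqP ->; rewrite distnn.
have [-> | neq_ij] := eqVneq i j; first by rewrite distnn.
rewrite big_ord_recl /cross !divn1 neq_ij muln1 (leq_trans (dist_div4 i j)) //.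
have lt_div4 k : k < 4 ^ K.+1 -> k %/ 4 < 4 ^ K by rewrite ltn_divLR // -expnSr.
rewrite leq_add2l (leq_trans (leq_mul (leqnn 2) (IH _ _ (lt_div4 _ lt_i) (lt_div4 _ lt_j)))) //.
rewrite big_distrr /=; apply: leq_sum => k _.
by rewrite /cross !expnS !divnMA !mulnA.
Qed.

Fixpoint tree_all_ind (P : tree -> Prop)
    (IH : forall cs, List.Forall P cs -> P (Node cs)) (t : tree) : P t :=
  let: Node cs := t in
  IH cs ((fix all_children (cs : seq tree) : List.Forall P cs :=
            if cs is c :: cs' then List.Forall_cons c (tree_all_ind IH c) (all_children cs')
            else List.Forall_nil P) cs).

Lemma tree_size_gt0 t : 0 < tree_size t.
Proof. by case: t. Qed.

Fixpoint edges (t : tree) (p : nat) : seq (nat * nat) :=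
  let: Node cs := t in
  (fix go (cs : seq tree) (q : nat) : seq (nat * nat) :=
     if cs is c :: cs' then (p, q) :: edges c q ++ go cs' (q + tree_size c) else [::])
    cs p.+1.

Fixpoint child_edges (p : nat) (cs : seq tree) (q : nat) : seq (nat * nat) :=
  if cs is c :: cs' then (p, q) :: edges c q ++ child_edges p cs' (q + tree_size c) else [::].

Lemma edges_Node cs p : edges (Node cs) p = child_edges p cs p.+1.
Proof. by rewrite /=; elim: cs p.+1 => //= c cs IH q; rewrite IH. Qed.

Lemma lf_energy_edges t p : lf_energy t p = \sum_(e <- edges t p) dist e.1 e.2.
Proof.
elim/tree_all_ind: t p => cs IH p; rewrite edges_Node /=.
elim: cs IH p.+1 => [|c cs IHcs] IH q; first by rewrite big_nil.
case/List.Forall_cons_iff: IH => IHc IH.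
by rewrite big_cons big_cat IHc (IHcs IH) addnA.
Qed.

Definition nmult (M a b : nat) : nat := b %/ M - a %/ M.

Lemma nmultD M a b c : a <= b -> b <= c -> nmult M a c = nmult M a b + nmult M b c.
Proof.
by move=> le_ab le_bc; have := leq_div2r M le_ab; have := leq_div2r M le_bc; rewrite /nmult; lia.
Qed.

Lemma cross_le_nmult M a b : a <= b -> cross M a b <= nmult M a b.
Proof. by move=> le_ab; rewrite /cross /nmult; have := leq_div2r M le_ab; case: eqP; lia. Qed.

Definition nlog (E x : nat) : nat := \sum_(e < E.+1) (2 ^ e <= x).

Lemma nlog_le E x : nlog E x <= E.+1.
Proof.
by rewrite -[E.+1]card_ord -sum1_card; apply: leq_sum => e _; apply: leq_b1.
Qed.

Lemma leq_nlog E x y : x <= y -> nlog E x <= nlog E y.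
Proof.
move=> le_xy; apply: leq_sum => e _.
by case: (leqP (2 ^ e) x) => // /leq_trans/(_ le_xy) ->.
Qed.

Lemma nlog_double E x y : x < 2 ^ E -> 2 * x < y -> (nlog E x).+1 <= nlog E y.
Proof.
move=> lt_x lt_y; rewrite /nlog big_ord_recr big_ord_recl /= expn0.
rewrite (leqNgt (2 ^ E)) lt_x addn0 (_ : 0 < y) ?add1n ?ltnS; last by lia.
apply: leq_sum => e _; case: (leqP (2 ^ e) x) => // le_x.
by rewrite /bump /= add1n expnS; lia.
Qed.

Definition weight (D E x : nat) : nat := D * (nlog E x).+1.

Lemma leq_weight D E x y : x <= y -> weight D E x <= weight D E y.
Proof. by move=> le_xy; rewrite leq_mul2l ltnS leq_nlog ?orbT. Qed.

Lemma weight_light D E x y : x < 2 ^ E -> 2 * x < y -> weight D E x + D <= weight D E y.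
Proof.
by move=> lt_x lt_y; rewrite /weight -mulnSr leq_mul2l ltnS (nlog_double lt_x lt_y) orbT.
Qed.

Definition large (M D x : nat) : bool := M <= D * x.

Section RootEdges.
Variables (M D E p : nat).

(* Children of sizes [ss] are stored from position [r.+1] on; each contributes
   its edge from [p] and the bound on the crossings inside its own subtree. *)
Fixpoint root_cost (ss : seq nat) (r : nat) : nat :=
  if ss is x :: ss' then
    cross M p r.+1 + weight D E x * nmult M r.+1 (r + x) + root_cost ss' (r + x)
  else 0.

Fixpoint nshort (ss : seq nat) (r : nat) : nat :=
  if ss is x :: ss' then (r - p < M) + nshort ss' (r + x) else 0.

Fixpoint nlong (ss : seq nat) (r : nat) : nat :=
  if ss is x :: ss' then (M <= r - p) + nlong ss' (r + x) else 0.

Lemma nshort_le ss r : nshort ss r <= (r - p < M) * size ss.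
Proof.
elim: ss r => [|x ss IH] r //=; apply: leq_trans (leq_add (leqnn _) (IH _)) _.
by case: (ltnP (r - p) M); case: (ltnP (r + x - p) M); lia.
Qed.

(* [k] children of size at most [m] have been placed in [(p, r]]. *)
Lemma nlong_le ss r m k : p <= r -> path leq m ss -> all (fun x => 0 < x) ss ->
  r - p <= k * m -> k + size ss <= D -> nlong ss r <= count (large M D) ss - (r - p < M).
Proof.
elim: ss r m k => [|x ss IH] r m k //= le_pr /andP[le_mx path_ss] /andP[x_gt0 pos_ss] le_rp size_ss.
have le_rkx : r + x - p <= k.+1 * x by have := leq_mul (leqnn k) le_mx; rewrite mulSn; lia.
have le_rx : r + x - p <= D * x by apply: leq_trans le_rkx _; rewrite leq_mul2r; lia.
have := IH (r + x) x k.+1 (leq_trans le_pr (leq_addr _ _)) path_ss pos_ss le_rkx ltac:(lia).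
rewrite /large /=; case: (ltnP (r + x - p) M) => [short_x | long_x]; first by case: ltnP; lia.
by rewrite (leq_trans long_x le_rx); case: ltnP; lia.
Qed.

Hypothesis M_eq : M = 2 ^ E.

(* The child of size [x] is light: if an edge after it is short then [x < M],
   and the next child, at least as large, leaves [2 * x < s]. *)
Lemma weight_light_child s x ss r : p <= r -> path leq x ss -> x + sumn ss < s ->
  size ss < D -> weight D E x + nshort ss (r + x) <= weight D E s.
Proof.
move=> le_pr sorted_ss lt_s size_ss; have short_ss := nshort_le ss (r + x).
have [->|sc_gt0] := posnP (nshort ss (r + x)); first by rewrite addn0 leq_weight //; lia.
have lt_xM : x < 2 ^ E by rewrite -M_eq; move: short_ss; case: ltnP; lia.
have lt_2x : 2 * x < s.
  case: (ss) sorted_ss sc_gt0 short_ss lt_s => [|y ss'] /=; first lia.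
  by case/andP => le_xy _; lia.
by apply: leq_trans (weight_light D lt_xM lt_2x); move: short_ss; case: ltnP; lia.
Qed.

(* Each remaining short edge may cross any boundary in [(p, r]]; each boundary
   still ahead is charged [weight D E s]. *)
Lemma root_cost_le s ss r : p <= r -> size ss <= D -> sorted leq ss ->
    all (fun x => 0 < x) ss -> sumn ss < s ->
  root_cost ss r <=
    nshort ss r * nmult M p r + weight D E s * nmult M r (r + sumn ss) + nlong ss r.
Proof.
elim: ss r => [|x ss IH] r //= le_pr size_ss sorted_ss /andP[x_gt0 pos_ss] lt_s.
have IHx := IH (r + x) (leq_trans le_pr (leq_addr _ _)) (ltnW size_ss)
  (path_sorted sorted_ss) pos_ss (leq_ltn_trans (leq_addl _ _) lt_s).
have nmult_split : nmult M r (r + (x + sumn ss)) =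
    nmult M r r.+1 + nmult M r.+1 (r + x) + nmult M (r + x) (r + x + sumn ss).
  by rewrite addnA -!nmultD //; lia.
have short_ss := nshort_le ss (r + x).
rewrite nmult_split; case: (ltnP (r - p) M) => [short_x | long_x] /=.
- set sc := nshort ss (r + x) in IHx short_ss *.
  have cross_le : cross M p r.+1 <= nmult M p r + nmult M r r.+1.
    by rewrite -nmultD ?cross_le_nmult //; lia.
  have le_sc : sc <= size ss by move: short_ss; case: ltnP; lia.
  have w1 : 1 + sc <= weight D E s.
    by apply: leq_trans (leq_pmulr _ _); lia.
  have w2 := weight_light_child le_pr sorted_ss lt_s size_ss.
  have split_pr : nmult M p (r + x) = nmult M p r + nmult M r r.+1 + nmult M r.+1 (r + x).
    by rewrite -!nmultD //; lia.
  move: IHx; rewrite split_pr.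
  have := leq_mul w1 (leqnn (nmult M r r.+1)).
  have := leq_mul w2 (leqnn (nmult M r.+1 (r + x))).
  rewrite !mulnDl !mulnDr; lia.
- have -> : nshort ss (r + x) = 0 by move: short_ss; rewrite ltnNge (leq_trans long_x) //; lia.
  have le_ws : weight D E x <= weight D E s by apply: leq_weight; lia.
  have := leq_mul le_ws (leqnn (nmult M r.+1 (r + x))).
  move: IHx; rewrite mul0n add0n /= mulnDr; have := leq_b1 (cross M p r.+1); lia.
Qed.

Lemma root_cost_first ss : size ss <= D -> sorted leq ss -> all (fun x => 0 < x) ss ->
  root_cost ss p <= weight D E (sumn ss).+1 * nmult M p (p + sumn ss) + (count (large M D) ss).-1.
Proof.
move=> size_ss sorted_ss pos_ss.
have := root_cost_le (leqnn p) size_ss sorted_ss pos_ss (ltnSn _).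
have path_ss : path leq 0 ss by rewrite path_min_sorted //; apply/allP.
have := @nlong_le ss p 0 0 (leqnn p) path_ss pos_ss (eq_leq (subnn p)) size_ss.
have M_gt0 : 0 < M by rewrite M_eq expn_gt0.
by rewrite subnn M_gt0 subn1 {1}/nmult subnn muln0 add0n; lia.
Qed.

End RootEdges.

Fixpoint excess (M D : nat) (t : tree) : nat :=
  let: Node cs := t in (count (large M D) (map tree_size cs)).-1 + sumn (map (excess M D) cs).

Definition crossings (M : nat) (t : tree) (p : nat) : nat := \sum_(e <- edges t p) cross M e.1 e.2.

Section Level.
Variables (M D E : nat).
Hypothesis M_eq : M = 2 ^ E.

Definition crossings_bounded (t : tree) : Prop := forall p,
  crossings M t p <= weight D E (tree_size t) * nmult M p (p + (tree_size t).-1) + excess M D t.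

Lemma child_crossings_le p cs r :
    List.Forall crossings_bounded cs ->
  \sum_(e <- child_edges p cs r.+1) cross M e.1 e.2 <=
    root_cost M D E p (map tree_size cs) r + sumn (map (excess M D) cs).
Proof.
elim: cs r => [|c cs IH] r; first by rewrite big_nil.
case/List.Forall_cons_iff => bounded_c bounded_cs /=.
rewrite big_cons big_cat /= addSn.
have := bounded_c r.+1; rewrite addSnnS prednK ?tree_size_gt0 //.
have := IH (r + tree_size c) bounded_cs; rewrite /crossings; lia.
Qed.

Lemma crossings_le t : max_children D t -> light_sorted t -> crossings_bounded t.
Proof.
elim/tree_all_ind: t => cs IH /andP[size_cs children_max] /andP[sorted_cs children_sorted] p.
have bounded_cs : List.Forall crossings_bounded cs.
  elim: cs IH children_max children_sorted {size_cs sorted_cs} => // c cs IHcs.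
  case/List.Forall_cons_iff => IHc IH /andP[max_c max_cs] /andP[sorted_c sorted_cs].
  by constructor; [apply: IHc | apply: IHcs].
have pos_cs : all (fun x => 0 < x) (map tree_size cs).
  by elim: (cs) => //= c cs' ->; rewrite tree_size_gt0.
rewrite /crossings edges_Node (leq_trans (child_crossings_le p p bounded_cs)) //=.
have sorted_sizes : sorted leq (map tree_size cs) by rewrite sorted_map.
have size_sizes : size (map tree_size cs) <= D by rewrite size_map.
have := root_cost_first p M_eq size_sizes sorted_sizes pos_cs; lia.
Qed.

End Level.

Section Excess.
Variables (M D : nat).
Hypothesis M_gt0 : 0 < M.

Definition excess_bounded (t : tree) : Prop :=
  M * (excess M D t + large M D (tree_size t)) <= D * tree_size t.

Lemma children_excess_le cs : List.Forall excess_bounded cs ->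
  let X := sumn (map (excess M D) cs) in let n := count (large M D) (map tree_size cs) in
  M * (X + n) <= D * sumn (map tree_size cs) /\ (n = 0 -> X = 0).
Proof.
elim: cs => [|c cs IH] /=; first by split => //; lia.
case/List.Forall_cons_iff; rewrite /excess_bounded => bounded_c /IH[le_cs small_cs].
split; first by move: bounded_c le_cs; rewrite !mulnDr; lia.
move=> n0; rewrite small_cs ?addn0; last by lia.
have /negbTE c_small : ~~ large M D (tree_size c) by move: n0; case: large.
move: bounded_c; rewrite c_small addn0; move/negbT: c_small; rewrite /large -ltnNge.
by case: (posnP (excess M D c)) => // e_gt0; have := leq_pmulr M e_gt0; lia.
Qed.

Lemma excess_le t : excess_bounded t.
Proof.
elim/tree_all_ind: t => cs /children_excess_le /=[le_cs small_cs].
rewrite /excess_bounded /large /=.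
case: (posnP (count (large M D) (map tree_size cs))) => [n0 | n_gt0].
  by rewrite n0 small_cs //; case: leqP; lia.
have -> : M <= D * (sumn (map tree_size cs)).+1.
  by move: le_cs; rewrite mulnDr mulnSr; have := leq_pmulr M n_gt0; lia.
by rewrite addn1 -addSn prednK // addnC mulnSr (leq_trans le_cs) ?leq_addr.
Qed.

End Excess.

Lemma sum_le_poly_geometric (a : nat -> nat) Y K :
  (forall k, 2 ^ k * a k <= (2 * k + 3) * Y) -> \sum_(k < K) a k <= 10 * Y.
Proof.
move=> le_a.
have tail : 2 ^ K * \sum_(k < K) a k + (4 * K + 10) * Y <= 10 * 2 ^ K * Y.
  elim: K => [|K IH]; first by rewrite big_ord0 expn0; lia.
  rewrite big_ord_recr /= expnS; move: (le_a K) IH.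
  move: (2 ^ K) (\sum_(k < K) a k) (a K) => P S A; nia.
rewrite -(leq_pmul2l (expn_gt0 2 K)); move: tail; rewrite mulnCA; lia.
Qed.

Lemma crossings_level_le D t k : max_children D t -> light_sorted t ->
  2 ^ k * (2 ^ k.+1 * crossings (4 ^ k) t 0) <= (2 * k + 3) * (2 * D * tree_size t).
Proof.
move=> max_t sorted_t; set s := tree_size t.
have M_eq : 4 ^ k = 2 ^ (2 * k) by rewrite expnM.
have le_cr := crossings_le M_eq max_t sorted_t 0; rewrite add0n -/s in le_cr.
have le_ex : 4 ^ k * excess (4 ^ k) D t <= D * s.
  by apply: leq_trans (excess_le D (expn_gt0 4 k) t); rewrite leq_mul2l leq_addr orbT.
have le_w : weight D (2 * k) s <= D * (2 * k + 2) by rewrite leq_mul2l addn2 ltnS nlog_le orbT.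
have le_nm : 4 ^ k * nmult (4 ^ k) 0 s.-1 <= s.
  by rewrite /nmult div0n subn0 mulnC (leq_trans (leq_divM _ _)) ?leq_pred.
have le_cr4 : 4 ^ k * crossings (4 ^ k) t 0 <= D * (2 * k + 2) * s + D * s.
  apply: leq_trans (leq_mul (leqnn _) le_cr) _.
  by rewrite mulnDr mulnCA leq_add // leq_mul.
have pow_k : 2 ^ k * 2 ^ k.+1 = 2 * 4 ^ k by rewrite expnS mulnCA -expnD addnn -mul2n expnM.
by rewrite mulnA pow_k -mulnA; move: le_cr4; lia.
Qed.

Lemma lf_energy_le_crossings t p :
  exists K, lf_energy t p <= \sum_(k < K) 2 ^ k.+1 * crossings (4 ^ k) t p.
Proof.
set K := (\max_(e <- edges t p) maxn e.1 e.2).+1; exists K.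
have dist_le e : e \in edges t p ->
    dist e.1 e.2 <= \sum_(k < K) 2 ^ k.+1 * cross (4 ^ k) e.1 e.2.
  move=> e_in; have := leq_bigmax_seq (F := fun e => maxn e.1 e.2) e e_in isT.
  have := ltn_expl K (isT : 1 < 4); rewrite geq_max => lt_K /andP[le1 le2].
  by apply: dist_le_cross; apply: ltn_trans lt_K; rewrite ltnS.
apply: (@leq_trans (\sum_(e <- edges t p) \sum_(k < K) 2 ^ k.+1 * cross (4 ^ k) e.1 e.2)).
  by rewrite lf_energy_edges !big_seq; apply: leq_sum.
by rewrite exchange_big; under eq_bigr => k _ do rewrite -big_distrr.
Qed.

Theorem mainTheorem3 :
  forall D : nat, 1 <= D ->
  exists C : nat,
    forall t : tree,
      max_children D t -> light_sorted t ->
      lf_energy t 0 <= C * tree_size t.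
Proof.
move=> D _; exists (20 * D) => t max_t sorted_t.
have [K /leq_trans -> //] := lf_energy_le_crossings t 0.
rewrite (_ : 20 * D * _ = 10 * (2 * D * tree_size t)); last by rewrite !mulnA.
apply: (@sum_le_poly_geometric (fun k => 2 ^ k.+1 * crossings (4 ^ k) t 0)) => k.
exact: crossings_level_le.
Qed.
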